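(* Let $1\le s\le n$, let $\mathbf{D}=[\mathbf{d}_1,\dots,\mathbf{d}_n]\in\mathbb{R}^{d\times n}$ be any matrix with $\max\{\|\mathbf{d}_i\|_2^2: i\in[n]\}\le\rho$, and let $\mathbf{g}\sim N(\mathbf{0},\mathbf{I}_d)$. Then \[ \mathbb{E}\sqrt{\frac1s\sum_{\ell=1}^s\big((\mathbf{D}^\top\mathbf{g})^*_\ell\big)^2}\ \le\ \sqrt{4\rho\log(\sqrt2\,n/s)}. \]
   Context: For $\mathbf{x}\in\mathbb{R}^n$, the nonincreasing rearrangement $\mathbf{x}^*$ satisfies $x_1^*\ge\dots\ge x_n^*\ge0$ with $x_i^*=|x_{\pi(i)}|$ for some permutation $\pi$. *)

From HB Require Import structures.
From mathcomp Require Import all_boot all_order all_algebra.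
From mathcomp Require Import all_classical all_reals all_analysis.
Set Implicit Arguments. Unset Strict Implicit. Unset Printing Implicit Defensive.
Import Order.TTheory GRing.Theory Num.Theory.
Local Open Scope ring_scope.

(* Expectation E[f(g)] for g ~ N(0, I_d), g represented as a row vector of
   size d, for f nonnegative (extended-real valued).  Since the coordinates of
   g are i.i.d. standard normal, this is the iterated integral against the
   standard normal probability measure normal_prob 0 1 (Tonelli). *)
Fixpoint gauss_expect {R : realType} (d : nat) : ('rV[R]_d -> \bar R) -> \bar R :=
  match d return ('rV[R]_d -> \bar R) -> \bar R with
  | 0 => fun f => f 0
  | d'.+1 => fun f =>
      (\int[normal_prob (0:R) 1]_x
         gauss_expect (fun v : 'rV[R]_d' => f (row_mx (\row_(j < 1) x) v)))%E
  end.

(* Nonincreasing rearrangement x^* (star) of x in R^n : the sorted list of |x_i|,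
   in nonincreasing order; the l-th entry of x^* (1-indexed) is nth 0 (rearr x) (l-1). *)
Definition rearr {R : realType} (n : nat) (x : 'rV[R]_n) : seq R :=
  path.sort (fun a b : R => (b <= a)%R) (map (fun i : 'I_n => `|x 0 i|) (enum 'I_n)).

(* Write x = D^T g, Y = (1/s) sum_(l < s) (x^*_l)^2, M = sqrt 2 n / s and
   t = 4 rho ln M.  By AM-GM, sqrt Y <= (Y + t) / (2 sqrt t), which is affine in
   Y, so no Jensen step is needed.  The tangent-line bound
   z^2 <= 4 rho (ln M - 1) + (4 rho / M) exp(z^2 / (4 rho)), summed over the s
   largest coordinates and then over all n of them, bounds Y by an affine
   combination of the exp(x_i^2 / (4 rho)).  Each x_i is a centred Gaussian of
   variance |d_i|^2 <= rho, so E exp(x_i^2 / (4 rho)) = (1 - |d_i|^2 / (2 rho))^(-1/2)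
   <= sqrt 2, and the constants collapse to sqrt t.  That Gaussian moment is
   computed one coordinate of g at a time by completing the square: integrating
   exp(lam (c + sqrt v g)^2) against N(0, 1) gives the same shape with new
   parameters, and the variances of successive coordinates add. *)

From HB Require Import structures.
From mathcomp Require Import all_boot all_order all_algebra.
From mathcomp Require Import all_classical all_reals all_analysis.
From mathcomp Require Import measurable_realfun.
From mathcomp Require Import ring lra.
Set Implicit Arguments. Unset Strict Implicit. Unset Printing Implicit Defensive.
Import Order.TTheory GRing.Theory Num.Theory.
Local Open Scope classical_set_scope.
Local Open Scope ring_scope.

Section nonneg_integral.
Local Open Scope ereal_scope.
Context d (T : measurableType d) (R : realType) (mu : {measure set T -> \bar R}).

(* Unlike [ge0_le_integral], no measurability is required: the integrand of the
   theorem, built from sorting, is never shown to be measurable. *)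
Lemma ge0_le_integralT (f g : T -> \bar R) :
  (forall x, 0 <= f x) -> (forall x, f x <= g x) ->
  \int[mu]_x f x <= \int[mu]_x g x.
Proof.
move=> f0 fg; have g0 x : 0 <= g x := le_trans (f0 x) (fg x).
rewrite !ge0_integralTE//; apply: ereal_sup_le => _ [h hf <-].
by exists h => // x; exact: le_trans (hf x) (fg x).
Qed.

End nonneg_integral.

Section normal_integral.
Context {R : realType}.
Local Notation mu := (@lebesgue_measure R).

Lemma ge0_integral_normal01 (h : R -> \bar R) : (forall x, 0 <= h x)%E ->
  measurable_fun [set: R] h ->
  (\int[normal_prob 0 1]_x h x = \int[mu]_x (h x * (normal_pdf 0 1 x)%:E))%E.
Proof.
move=> h0 mh; have dom := @normal_prob_dominates R 0 1.
have intf := Radon_Nikodym_SigmaFinite.f_integrable dom.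
have mpdf : measurable_fun [set: R] (fun x => (normal_pdf 0 1 x)%:E).
  by apply/measurable_EFinP; exact: measurable_normal_pdf.
rewrite -(Radon_Nikodym_SigmaFinite.change_of_variables dom) //.
apply: ae_eq_integral => //; try by apply: emeasurable_funM => //; exact: measurable_int intf.
apply: ae_eqe_mul2l; apply: integral_ae_eq => // E _ mE.
by rewrite -Radon_Nikodym_SigmaFinite.f_integral.
Qed.

(* [expsq_mgf lam v c] is E[exp(lam (c + sqrt v * g)^2)] for g ~ N(0, 1), when 2 lam v < 1. *)
Definition expsq_mgf (lam v c : R) : R :=
  (Num.sqrt (1 - 2 * lam * v))^-1 * expR (lam / (1 - 2 * lam * v) * c ^+ 2).

Lemma expR_sqr_normal_pdf (lam b c x : R) : 0 < 1 - 2 * lam * b ^+ 2 ->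
  expR (lam * (c + x * b) ^+ 2) * normal_pdf 0 1 x =
  expsq_mgf lam (b ^+ 2) c * normal_pdf (2 * lam * b * c / (1 - 2 * lam * b ^+ 2))
    (Num.sqrt (1 - 2 * lam * b ^+ 2))^-1 x.
Proof.
set q := 1 - 2 * lam * b ^+ 2 => q0; rewrite /expsq_mgf -/q.
have sq0 : 0 < Num.sqrt q by rewrite sqrtr_gt0.
rewrite /normal_pdf oner_eq0 invr_eq0 gt_eqF // /normal_peak /normal_fun.
rewrite exprVn sqr_sqrtr ?ltW // expr1n mul1r -mulrnAr sqrtrM ?invr_ge0 ?ltW //.
rewrite sqrtrV ?ltW // invfM invrK.
have sP0 : 0 < Num.sqrt (pi *+ 2 : R) by rewrite sqrtr_gt0 mulrn_wgt0 // pi_gt0.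
transitivity ((Num.sqrt (pi *+ 2))^-1 * expR (lam / q * c ^+ 2 +
   - (x - 2 * lam * b * c / q) ^+ 2 / (q^-1 *+ 2))).
  rewrite mulrCA -expRD; congr (_ * expR _).
  by rewrite /q; field; rewrite -/q gt_eqF.
by rewrite expRD; field; rewrite !gt_eqF.
Qed.

Lemma integral_normal01_expsq n (A : R) (B lam b c : 'I_n -> R) :
  (forall i, 0 < 1 - 2 * lam i * b i ^+ 2) ->
  (forall x, 0 <= A + \sum_i B i * expR (lam i * (c i + x * b i) ^+ 2)) ->
  (\int[normal_prob 0 1]_x (A + \sum_i B i * expR (lam i * (c i + x * b i) ^+ 2))%:E =
   (A + \sum_i B i * expsq_mgf (lam i) (b i ^+ 2) (c i))%:E)%E.
Proof.
move=> q0 h0.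
have intZ r m s : mu.-integrable [set: R] (fun x => r%:E * (normal_pdf m s x)%:E)%E.
  by apply: integrableZl => //; exact: integrable_normal_pdf.
have integralZ r m s : (\int[mu]_x (r%:E * (normal_pdf m s x)%:E) = r%:E)%E.
  by rewrite integralZl ?integral_normal_pdf ?mule1 //; exact: integrable_normal_pdf.
rewrite ge0_integral_normal01; last 2 first.
- by move=> x; rewrite lee_fin.
- apply/measurable_EFinP; apply: measurable_funD => //; apply: measurable_sum => i.
  apply: measurable_funM => //; apply: measurableT_comp => //.
  apply: measurable_funM => //; apply: measurable_funX.
  by apply: measurable_funD => //; exact: measurable_funM.
have shift x : ((A + \sum_i B i * expR (lam i * (c i + x * b i) ^+ 2))%:E *
    (normal_pdf 0 1 x)%:E = A%:E * (normal_pdf 0 1 x)%:E + \sum_i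
    (B i * expsq_mgf (lam i) (b i ^+ 2) (c i))%:E *
    (normal_pdf (2 * lam i * b i * c i / (1 - 2 * lam i * b i ^+ 2))
      (Num.sqrt (1 - 2 * lam i * b i ^+ 2))^-1 x)%:E)%E.
  rewrite -EFinM mulrDl big_distrl EFinD EFinM -sumEFin; congr (_ + _)%E.
  apply: eq_bigr => i _; congr EFin.
  by rewrite -[LHS]mulrA expR_sqr_normal_pdf // mulrA.
under eq_integral do rewrite shift.
rewrite integralD //=; last by apply: integrable_sum => // i _; exact: intZ.
rewrite integral_sum // integralZ (eq_bigr _ (fun i _ => integralZ _ _ _)).
by rewrite sumEFin.
Qed.

Lemma subr_2M_gt0_addl (lam u v : R) : 0 <= u -> 0 <= v ->
  0 < 1 - 2 * lam * (u + v) -> 0 < 1 - 2 * lam * v.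
Proof. by move=> u0 v0; have [l0|l0] := leP 0 lam; nra. Qed.

Lemma subr_2M_divE (lam u v : R) : 1 - 2 * lam * v != 0 ->
  1 - 2 * (lam / (1 - 2 * lam * v)) * u =
  (1 - 2 * lam * (u + v)) / (1 - 2 * lam * v).
Proof. by move=> q'0; field. Qed.

Lemma expsq_mgf_add (lam u v c : R) : 0 <= u -> 0 <= v ->
  0 < 1 - 2 * lam * (u + v) ->
  (Num.sqrt (1 - 2 * lam * v))^-1 * expsq_mgf (lam / (1 - 2 * lam * v)) u c =
  expsq_mgf lam (u + v) c.
Proof.
move=> u0 v0 q0.
have q'0 := subr_2M_gt0_addl u0 v0 q0.
rewrite /expsq_mgf subr_2M_divE ?gt_eqF // sqrtrM ?ltW // sqrtrV ?ltW // invfM invrK mulrA.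
have -> : lam / (1 - 2 * lam * v) / ((1 - 2 * lam * (u + v)) / (1 - 2 * lam * v)) =
    lam / (1 - 2 * lam * (u + v)).
  by field; rewrite !gt_eqF.
by rewrite mulrCA mulVf ?mulr1 // gt_eqF // sqrtr_gt0.
Qed.

End normal_integral.

Section gauss_expect.
Context {R : realType}.

Lemma gauss_expect_ge0 d (f : 'rV[R]_d -> \bar R) :
  (forall g, 0 <= f g)%E -> (0 <= gauss_expect f)%E.
Proof.
elim: d f => [|d IH] f f0 /=; first exact: f0.
by apply: integral_ge0 => x _; apply: IH.
Qed.

Lemma le_gauss_expect d (f h : 'rV[R]_d -> \bar R) :
  (forall g, 0 <= f g)%E -> (forall g, f g <= h g)%E ->
  (gauss_expect f <= gauss_expect h)%E.
Proof.
elim: d f h => [|d IH] f h f0 fh /=; first exact: fh.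
apply: ge0_le_integralT => x; last by apply: IH.
by apply: gauss_expect_ge0.
Qed.

Lemma gauss_expect0 d : gauss_expect (fun _ : 'rV[R]_d => 0%E) = 0%E.
Proof.
elim: d => [|d IH] //=.
by under eq_integral do rewrite IH; rewrite integral0.
Qed.

Lemma mulmx_row_mxE d n (x : R) (v : 'rV[R]_d) (a : 'M[R]_(1 + d, n)) i :
  (row_mx (\row_(j < 1) x) v *m a) 0 i = x * usubmx a 0 i + (v *m dsubmx a) 0 i.
Proof.
rewrite -[a in LHS]vsubmxK mul_row_col mxE [X in X + _]mxE big_ord1.
by rewrite mxE.
Qed.

Lemma sum_sqr_col_split d n (a : 'M[R]_(1 + d, n)) i :
  \sum_j a j i ^+ 2 = usubmx a 0 i ^+ 2 + \sum_j dsubmx a j i ^+ 2.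
Proof.
by rewrite big_split_ord big_ord1 !mxE; congr (_ + _); apply: eq_bigr => j _; rewrite mxE.
Qed.

Lemma expsq_mgf0 (lam c : R) : expsq_mgf lam 0 c = expR (lam * c ^+ 2).
Proof. by rewrite /expsq_mgf mulr0 subr0 sqrtr1 invr1 mul1r mulr1. Qed.

Lemma gauss_expect_expsq d n (A : R) (B lam c : 'I_n -> R) (a : 'M[R]_(d, n)) :
  (forall i, 0 < 1 - 2 * lam i * \sum_j a j i ^+ 2) ->
  (forall g : 'rV_d, 0 <= A + \sum_i B i * expR (lam i * (c i + (g *m a) 0 i) ^+ 2)) ->
  gauss_expect (fun g => (A + \sum_i B i * expR (lam i * (c i + (g *m a) 0 i) ^+ 2))%:E) =
  (A + \sum_i B i * expsq_mgf (lam i) (\sum_j a j i ^+ 2) (c i))%:E.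
Proof.
elim: d B lam c a => [|d IH] B lam c a q_gt0 f_ge0 /=.
  congr (_ + _)%:E; apply: eq_bigr => i _.
  by rewrite big_ord0 expsq_mgf0 mul0mx mxE addr0.
set u := fun i => usubmx (a : 'M[R]_(1 + d, n)) 0 i.
set a' := dsubmx (a : 'M[R]_(1 + d, n)).
have v_ge0 i : 0 <= \sum_j a' j i ^+ 2 := sumr_ge0 _ (fun j _ => sqr_ge0 _).
have a_split i : \sum_j a j i ^+ 2 = u i ^+ 2 + \sum_j a' j i ^+ 2.
  exact: sum_sqr_col_split.
have q'_gt0 i : 0 < 1 - 2 * lam i * \sum_j a' j i ^+ 2.
  by apply: (subr_2M_gt0_addl (sqr_ge0 (u i)) (v_ge0 i)); rewrite -a_split.
(* Integrating out the last d coordinates leaves an integrand of the same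
   shape in the first one. *)
have inner x : gauss_expect (fun v : 'rV_d => (A + \sum_i B i *
      expR (lam i * (c i + (row_mx (\row_(j < 1) x) v *m a) 0 i) ^+ 2))%:E) =
    (A + \sum_i (B i * (Num.sqrt (1 - 2 * lam i * \sum_j a' j i ^+ 2))^-1) *
      expR (lam i / (1 - 2 * lam i * \sum_j a' j i ^+ 2) * (c i + x * u i) ^+ 2))%:E.
  under eq_fun do under eq_bigr do rewrite mulmx_row_mxE addrA.
  rewrite IH //; first by under eq_bigr do rewrite /expsq_mgf mulrA.
  move=> v; have := f_ge0 (row_mx (\row_(j < 1) x) v).
  by under eq_bigr do rewrite mulmx_row_mxE addrA.
under eq_integral do rewrite inner.
rewrite integral_normal01_expsq; last 2 first.
- by move=> i; rewrite subr_2M_divE ?gt_eqF // -a_split divr_gt0.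
- move=> x; rewrite -lee_fin -inner; apply: gauss_expect_ge0 => v.
  by rewrite lee_fin; exact: f_ge0.
congr (_ + _)%:E; apply: eq_bigr => i _.
by rewrite -mulrA expsq_mgf_add ?sqr_ge0 // -a_split.
Qed.

End gauss_expect.

Section rearrangement.
Context {R : realType}.

Lemma size_rearr n (x : 'rV[R]_n) : size (rearr x) = n.
Proof. by rewrite size_sort size_map size_enum_ord. Qed.

Lemma sum_rearr_le n s (x : 'rV[R]_n) (F : R -> R) : (s <= n)%N ->
  (forall z, 0 <= F z) ->
  \sum_(l < s) F (nth 0 (rearr x) l) <= \sum_i F `|x 0 i|.
Proof.
move=> sn F0.
have -> : \sum_i F `|x 0 i| = \sum_(z <- rearr x) F z.
  by rewrite (perm_big _ (permEl (perm_sort _ _))) big_map big_enum.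
rewrite (big_nth 0) size_rearr -(big_mkord xpredT (fun l => F (nth 0 (rearr x) l))).
by rewrite (big_cat_nat (leq0n s) sn) /= lerDl sumr_ge0.
Qed.

End rearrangement.

Section real_inequalities.
Context {R : realType}.

Lemma sqrt_le_amgm (y t : R) : 0 <= y -> 0 < t ->
  Num.sqrt y <= (y + t) / (2 * Num.sqrt t).
Proof.
move=> y0 t0; have st0 : 0 < Num.sqrt t by rewrite sqrtr_gt0.
rewrite ler_pdivlMr ?mulr_gt0 //.
have := sqr_ge0 (Num.sqrt y - Num.sqrt t).
rewrite sqrrB (sqr_sqrtr y0) (sqr_sqrtr (ltW t0)).
move: (Num.sqrt y) (Num.sqrt t) => a b; rewrite mulr2n; lra.
Qed.

(* The tangent line [expR u >= 1 + u] at [u = ln M], rescaled by [k]. *)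
Lemma sqr_le_expR (k M z : R) : 0 < k -> 0 < M ->
  z ^+ 2 <= k * (ln M - 1) + k / M * expR (k^-1 * z ^+ 2).
Proof.
move=> k0 M0; set u := k^-1 * z ^+ 2.
have -> : z ^+ 2 = k * u by rewrite /u mulVKf ?gt_eqF.
have := expR_ge1Dx (u - ln M); rewrite expRB lnK ?posrE // => h.
by rewrite -mulrA -mulrDr ler_pM2l //; lra.
Qed.

Lemma mean_top_sqr_le n s (x : 'rV[R]_n) (k M : R) : (0 < s)%N -> (s <= n)%N ->
  0 < k -> 0 < M ->
  s%:R^-1 * \sum_(l < s) (nth 0 (rearr x) l) ^+ 2 <=
  k * (ln M - 1) + k / (M * s%:R) * \sum_i expR (k^-1 * x 0 i ^+ 2).
Proof.
move=> s0 sn k0 M0; have s0' : 0 < s%:R :> R by rewrite ltr0n.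
rewrite [leRHS](_ : _ = s%:R^-1 * (k * (ln M - 1) *+ s +
    k / M * \sum_i expR (k^-1 * x 0 i ^+ 2))); last first.
  by rewrite -mulr_natr; field; rewrite !gt_eqF.
rewrite ler_pM2l ?invr_gt0 //.
apply: le_trans (ler_sum _ (fun (l : 'I_s) _ => sqr_le_expR (nth 0 (rearr x) l) k0 M0)) _.
rewrite big_split /= sumr_const card_ord lerD2l -mulr_sumr.
rewrite ler_pM2l ?divr_gt0 //.
apply: le_trans (sum_rearr_le x (F := fun z => expR (k^-1 * z ^+ 2)) sn
  (fun z => expR_ge0 _)) _.
by apply: ler_sum => i _; rewrite -normrX ger0_norm ?sqr_ge0.
Qed.

Lemma half_le_subr_2M (rho v : R) : 0 < rho -> v <= rho ->
  2^-1 <= 1 - 2 * (4 * rho)^-1 * v.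
Proof.
move=> rho0 v_le; rewrite (_ : 2 * _ * v = v / (2 * rho)); last by field; rewrite gt_eqF.
have : v / (2 * rho) <= 2^-1 by rewrite ler_pdivrMr ?mulr_gt0 //; lra.
lra.
Qed.

Lemma invr_sqrt_le_sqrt2 (q : R) : 2^-1 <= q -> (Num.sqrt q)^-1 <= Num.sqrt 2.
Proof.
move=> q_ge; have q0 : 0 < q by apply: lt_le_trans q_ge; rewrite invr_gt0.
rewrite -sqrtrV; last exact: ltW.
by rewrite ler_sqrt ?ltr0n // -div1r ler_pdivrMr //; lra.
Qed.

End real_inequalities.

Section top_coordinates.
Context {R : realType} (n s : nat) (rho : R).
Hypotheses (s_gt0 : (0 < s)%N) (s_le_n : (s <= n)%N) (rho_gt0 : 0 < rho).

Let k : R := 4 * rho.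
Let M : R := Num.sqrt 2 * n%:R / s%:R.
Let t : R := k * ln M.
(* [A + B * sum_i expR (x_i^2 / k)] is the AM-GM bound [(Y + t) / (2 sqrt t)]
   with [Y] replaced by its bound from [mean_top_sqr_le]. *)
Let A : R := (k * (ln M - 1) + t) / (2 * Num.sqrt t).
Let B : R := k / (M * s%:R) / (2 * Num.sqrt t).

Let s_real_gt0 : 0 < s%:R :> R. Proof. by rewrite ltr0n. Qed.
Let n_real_gt0 : 0 < n%:R :> R. Proof. by rewrite ltr0n (leq_trans s_gt0). Qed.
Let sqrt2_gt1 : 1 < Num.sqrt 2 :> R.
Proof. by rewrite -[X in X < _]sqrtr1 ltr_sqrt // ltr1n. Qed.
Let k_gt0 : 0 < k. Proof. by rewrite mulr_gt0. Qed.

Let M_gt1 : 1 < M.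
Proof.
have := sqrt2_gt1; have : 1 <= n%:R / s%:R :> R.
  by rewrite ler_pdivlMr // mul1r ler_nat.
by rewrite /M -mulrA; nra.
Qed.

Let M_gt0 : 0 < M. Proof. exact: lt_trans M_gt1. Qed.
Let t_gt0 : 0 < t. Proof. by rewrite mulr_gt0 ?ln_gt0. Qed.
Let sqrt_t_gt0 : 0 < Num.sqrt t. Proof. by rewrite sqrtr_gt0. Qed.

(* The [0 +] is the centre [c] of [gauss_expect_expsq]. *)
Lemma sqrt_mean_top_sqr_le (x : 'rV[R]_n) :
  Num.sqrt (s%:R^-1 * \sum_(l < s) (nth 0 (rearr x) l) ^+ 2) <=
  A + \sum_i B * expR (k^-1 * (0 + x 0 i) ^+ 2).
Proof.
have Y_ge0 : 0 <= s%:R^-1 * \sum_(l < s) (nth 0 (rearr x) l) ^+ 2.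
  by rewrite mulr_ge0 ?invr_ge0 ?ler0n ?sumr_ge0 // => l _; exact: sqr_ge0.
apply: le_trans (sqrt_le_amgm Y_ge0 t_gt0) _.
rewrite (eq_bigr (fun i => B * expR (k^-1 * x 0 i ^+ 2))) => [|i _]; last by rewrite add0r.
rewrite -mulr_sumr (_ : A + _ = (k * (ln M - 1) + k / (M * s%:R) *
    \sum_i expR (k^-1 * x 0 i ^+ 2) + t) / (2 * Num.sqrt t)); last first.
  by rewrite /A /B; field; rewrite !gt_eqF.
rewrite ler_pM2r ?invr_gt0 ?mulr_gt0 // lerD2r.
exact: mean_top_sqr_le.
Qed.

Lemma expsq_bound_sqrt2E : A + \sum_(i < n) B * Num.sqrt 2 = Num.sqrt t.
Proof.
rewrite sumr_const card_ord -[_ *+ n]mulr_natr (_ : A + _ = t / Num.sqrt t).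
  by rewrite -{1}(sqr_sqrtr (ltW t_gt0)) expr2 mulfK // gt_eqF.
rewrite /A /B /M /t; field.
by rewrite !gt_eqF // (lt_trans _ sqrt2_gt1).
Qed.

Lemma gauss_expect_sqrt_mean_top_sqr_le d (D : 'M[R]_(d, n)) :
  (forall i, \sum_j D j i ^+ 2 <= rho) ->
  (gauss_expect (fun g : 'rV_d =>
     (Num.sqrt (s%:R^-1 * \sum_(l < s) (nth 0 (rearr (g *m D)) l) ^+ 2))%:E)
   <= (Num.sqrt t)%:E)%E.
Proof.
move=> hD.
have bound g := sqrt_mean_top_sqr_le (g *m D).
apply: le_trans (le_gauss_expect
  (h := fun g => (A + \sum_i B * expR (k^-1 * (0 + (g *m D) 0 i) ^+ 2))%:E) _ _) _.
- by move=> g; rewrite lee_fin sqrtr_ge0.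
- by move=> g; rewrite lee_fin bound.
have q_ge i : 2^-1 <= 1 - 2 * k^-1 * \sum_j D j i ^+ 2 := half_le_subr_2M rho_gt0 (hD i).
rewrite (gauss_expect_expsq (B := fun _ => B) (lam := fun _ => k^-1) (c := fun _ => 0));
  last 2 first.
- by move=> i; apply: lt_le_trans (q_ge i); rewrite invr_gt0.
- by move=> g; apply: le_trans (bound g); exact: sqrtr_ge0.
rewrite lee_fin -expsq_bound_sqrt2E lerD2l; apply: ler_sum => i _.
apply: ler_wpM2l; first by rewrite !divr_ge0 ?mulr_ge0 // ltW.
by rewrite /expsq_mgf expr0n mulr0 expR0 mulr1; exact: invr_sqrt_le_sqrt2 (q_ge i).
Qed.

End top_coordinates.

Theorem lemma4p7 (R : realType) (d n s : nat) (D : 'M[R]_(d, n)) (rho : R) :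
  (1 <= s)%N -> (s <= n)%N ->
  (forall i : 'I_n, \sum_(j < d) (D j i) ^+ 2 <= rho) ->
  (gauss_expect (fun g : 'rV[R]_d =>
     (Num.sqrt (s%:R^-1 * \sum_(l < s) (nth 0 (rearr (g *m D)) l) ^+ 2))%:E)
   <= (Num.sqrt (4 * rho * ln (Num.sqrt 2 * n%:R / s%:R)))%:E)%E.
Proof.
move=> s_gt0 sn hD.
have col_ge0 i : 0 <= \sum_j D j i ^+ 2 := sumr_ge0 _ (fun j _ => sqr_ge0 _).
have := le_trans (col_ge0 (Ordinal (leq_trans s_gt0 sn))) (hD _).
rewrite le_eqVlt => /predU1P[rho0|]; last first.
  by move=> rho_gt0; exact: gauss_expect_sqrt_mean_top_sqr_le.
have D0 : D = 0.
  apply/matrixP => j i; rewrite mxE; apply/eqP; rewrite -sqrf_eq0; apply/eqP.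
  apply: (@psumr_eq0P _ _ xpredT (fun k => D k i ^+ 2)) => // [k _|]; first exact: sqr_ge0.
  by apply/eqP; rewrite eq_le col_ge0 andbT [leRHS]rho0.
have top0 : \sum_(l < s) (nth 0 (rearr (0 : 'rV[R]_n)) l) ^+ 2 = 0.
  apply/eqP; rewrite eq_le sumr_ge0 ?andbT => [|l _]; last exact: sqr_ge0.
  apply: le_trans (sum_rearr_le _ (F := fun z => z ^+ 2) sn (@sqr_ge0 _)) _.
  by rewrite big1 // => i _; rewrite mxE normr0 expr0n.
have -> : (fun g : 'rV[R]_d =>
    (Num.sqrt (s%:R^-1 * \sum_(l < s) (nth 0 (rearr (g *m D)) l) ^+ 2))%:E) = fun=> 0%E.
  by apply/funext => g; rewrite D0 mulmx0 top0 mulr0 sqrtr0.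
by rewrite gauss_expect0 lee_fin sqrtr_ge0.
Qed.
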